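(* Assume $\mu_1=\mu_2=\mu_3=1$ and $\rho_i+\rho_j\le1$ for all $i\neq j$. Then there are uncountably many triples of decision points $(d_1,d_2,d_3)\in(0,1)^3$ for which at least one of the decision points has infinitely many distinct pre-images.
   Context: Fix $\rho_1,\rho_2,\rho_3\in(0,1)$ with $\rho_1+\rho_2+\rho_3>1$, $\mu_i=1$, $\theta:=\rho_1+\rho_2+\rho_3-1$. $A_i^0:=\{y\in\mathbb R^3: y_1+y_2+y_3=1, y_i=0, y_l\ge0\}$, $A^0:=\bigcup_iA_i^0$; for $z\in A^0\setminus A_j^0$, $f_j(z):=\sum_{i\neq j}\frac{(1-\rho_j)z_i+\rho_i z_j}{(1-\rho_j)+\theta z_j}e_i$. For $(\hat i,\hat j,\hat k)$ equal to $(1,2,3)$ or a cyclic permutation, $(1-x)e_{\hat j}+xe_{\hat k}\in A^0_{\hat i}$ is written $(x,\hat i)$. Decision points $d_1,d_2,d_3\in(0,1)$ (identified with $(d_{\hat i},\hat i)$); switching rule $\mathfrak R((x,\hat i))=\hat j$ if $x<d_{\hat i}$, $\hat k$ if $x>d_{\hat i}$, both allowed if $x=d_{\hat i}$; $\varphi(z):=f_{\mathfrak R(z)}(z)$. A trajectory is $(z(t))$ with $z(t+1)\in\varphi(z(t))$; $z$ is a pre-image of $z'$ if some trajectory from $z$ has $z(t)=z'$ for some $t\ge1$. *)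

From Stdlib Require Import Reals Lra List.
Open Scope R_scope.

Inductive idx := i1 | i2 | i3.

Record pt := mkpt { c1 : R; c2 : R; c3 : R }.

Definition coord (z : pt) (i : idx) : R :=
  match i with i1 => c1 z | i2 => c2 z | i3 => c3 z end.

Definition e (i : idx) : pt :=
  match i with i1 => mkpt 1 0 0 | i2 => mkpt 0 1 0 | i3 => mkpt 0 0 1 end.

Definition padd (a b : pt) : pt := mkpt (c1 a + c1 b) (c2 a + c2 b) (c3 a + c3 b).
Definition pscale (s : R) (a : pt) : pt := mkpt (s * c1 a) (s * c2 a) (s * c3 a).

(* cyclic successor: (i^, j^, k^) = (i, nxt i, nxt (nxt i)) ranges over
   (1,2,3), (2,3,1), (3,1,2). *)
Definition nxt (i : idx) : idx := match i with i1 => i2 | i2 => i3 | i3 => i1 end.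

Definition rho (r1 r2 r3 : R) (i : idx) : R :=
  match i with i1 => r1 | i2 => r2 | i3 => r3 end.
Definition theta (r1 r2 r3 : R) : R := r1 + r2 + r3 - 1.

Definition A0i (i : idx) (y : pt) : Prop :=
  c1 y + c2 y + c3 y = 1 /\ coord y i = 0 /\
  0 <= c1 y /\ 0 <= c2 y /\ 0 <= c3 y.
Definition A0 (y : pt) : Prop := exists i, A0i i y.

(* f_j(z) = sum_{i <> j} ((1-rho_j) z_i + rho_i z_j)/((1-rho_j) + theta z_j) e_i,
   (used only for z in A^0 \ A_j^0) *)
Definition fj (r1 r2 r3 : R) (j : idx) (z : pt) : pt :=
  let rh := rho r1 r2 r3 in
  let cmp i := if (match i, j with
                   | i1, i1 | i2, i2 | i3, i3 => true | _, _ => false end)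
               then 0
               else ((1 - rh j) * coord z i + rh i * coord z j)
                      / ((1 - rh j) + theta r1 r2 r3 * coord z j) in
  mkpt (cmp i1) (cmp i2) (cmp i3).

(* the point (x, i^) := (1-x) e_{j^} + x e_{k^} of A^0_{i^} *)
Definition ptof (x : R) (i : idx) : pt :=
  padd (pscale (1 - x) (e (nxt i))) (pscale x (e (nxt (nxt i)))).

(* switching rule R as a relation: switch z j  <->  j is an allowed value of R(z);
   d i is the decision point d_i. *)
Definition switch (d : idx -> R) (z : pt) (j : idx) : Prop :=
  exists (i : idx) (x : R), 0 <= x <= 1 /\ z = ptof x i /\
    ((x < d i /\ j = nxt i) \/
     (x > d i /\ j = nxt (nxt i)) \/
     (x = d i /\ (j = nxt i \/ j = nxt (nxt i)))).

Definition phi (r1 r2 r3 : R) (d : idx -> R) (z w : pt) : Prop :=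
  exists j, switch d z j /\ w = fj r1 r2 r3 j z.

Definition trajectory (r1 r2 r3 : R) (d : idx -> R) (z : nat -> pt) : Prop :=
  forall t, phi r1 r2 r3 d (z t) (z (S t)).

Definition preimage (r1 r2 r3 : R) (d : idx -> R) (z z' : pt) : Prop :=
  exists traj : nat -> pt, trajectory r1 r2 r3 d traj /\ traj 0%nat = z /\
    exists t, (1 <= t)%nat /\ traj t = z'.

Definition infinite_pts (P : pt -> Prop) : Prop :=
  ~ exists l : list pt, forall z, P z -> In z l.

Definition dvec (d : R * R * R) (i : idx) : R :=
  match d with (d1, d2, d3) => match i with i1 => d1 | i2 => d2 | i3 => d3 end end.

Definition uncountable3 (S : R * R * R -> Prop) : Prop :=
  ~ exists g : R * R * R -> nat,
      forall a b, S a -> S b -> g a = g b -> a = b.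

From Stdlib Require Import Reals Lra Lia ZArith List FinFun ClassicalEpsilon Arith.Cantor.
Open Scope R_scope.

(* Choose [d_2] small and [d_3] large.  Then every point [(u, 1)] of A_1^0 returns to
   A_1^0 after two steps, through A_2^0 if [u <= d_1] and through A_3^0 otherwise.  The
   two branches [a], [b] of this return map are composites of Moebius maps, increasing
   and (as [rho_1 + rho_2 <= 1] and [rho_1 + rho_3 <= 1]) nonexpanding, and the image of
   [b] lies strictly below that of [a].  Such a gap map has a backward orbit
   [y_0 <- y_1 <- ...] whose itinerary is the Sturmian coding of an irrational rotation:
   [y_k] is the limit of the corresponding compositions of [a] and [b] applied to [0].
   Taking [d_1 := y_0], the points [(y_k, 1)] are pre-images of the decision point
   [(d_1, 1)], and they are pairwise distinct since a repetition would make the coding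
   eventually periodic, i.e. the rotation number rational.  Finally [d_2] ranges over
   a whole interval, which gives uncountably many triples. *)

(** * Uncountability of intervals *)

Section AvoidSequence.

Variable u : nat -> R.

Definition avoid_step (n : nat) (I : R * R) : R * R :=
  let (l, r) := I in
  if Rlt_dec (u n) ((l + r) / 2) then (r - (r - l) / 3, r) else (l, l + (r - l) / 3).

Fixpoint avoid_interval (l r : R) (n : nat) : R * R :=
  match n with O => (l, r) | S n => avoid_step n (avoid_interval l r n) end.

Variables l r : R.
Hypothesis lt_lr : l < r.

Let lo n := fst (avoid_interval l r n).
Let hi n := snd (avoid_interval l r n).

Lemma avoid_interval_succ n :
  lo n < hi n -> lo n <= lo (S n) < hi (S n) /\ hi (S n) <= hi n /\
  (u n < lo (S n) \/ hi (S n) < u n).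
Proof.
  unfold lo, hi; simpl; destruct (avoid_interval l r n) as [a b]; simpl; intro.
  destruct (Rlt_dec _ _); simpl; lra.
Qed.

Lemma avoid_interval_nonempty n : lo n < hi n.
Proof.
  induction n as [|n IH]; [exact lt_lr|].
  apply avoid_interval_succ in IH; lra.
Qed.

Lemma avoid_interval_nested n m : (n <= m)%nat -> lo n <= lo m /\ hi m <= hi n.
Proof.
  induction 1 as [|m _ IH]; [lra|].
  pose proof (avoid_interval_succ m (avoid_interval_nonempty m)); lra.
Qed.

Lemma exists_not_in_seq : exists x, l <= x <= r /\ forall n, x <> u n.
Proof.
  assert (lo_le_hi : forall n m, lo n <= hi m).
  { intros n m; destruct (Nat.le_ge_cases n m) as [nm|mn].
    - pose proof (avoid_interval_nested n m nm); pose proof (avoid_interval_nonempty m); lra.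
    - pose proof (avoid_interval_nested m n mn); pose proof (avoid_interval_nonempty n); lra. }
  assert (lo_growing : Un_growing lo).
  { intro n; apply (avoid_interval_nested n (S n)); lia. }
  destruct (growing_cv lo lo_growing) as [x lo_cv].
  { exists (hi 0%nat); intros y [n ->]; apply lo_le_hi. }
  assert (x_le_hi : forall m, x <= hi m).
  { intro m; apply (Rle_cv_lim (Un := lo) (Vn := fun _ => hi m)); auto.
    intros eps eps_pos; exists 0%nat; intros; unfold Rdist; rewrite Rminus_diag, Rabs_R0; lra. }
  pose proof (growing_ineq lo x lo_growing lo_cv) as lo_le_x.
  exists x; split.
  - specialize (lo_le_x 0%nat); specialize (x_le_hi 0%nat); unfold lo, hi in *; simpl in *; lra.
  - intros n ->; specialize (lo_le_x (S n)); specialize (x_le_hi (S n)).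
    pose proof (avoid_interval_succ n (avoid_interval_nonempty n)); lra.
Qed.

End AvoidSequence.

Lemma interval_not_countable (l r : R) (h : R -> nat) : l < r ->
  ~ (forall s t, l < s < r -> l < t < r -> h s = h t -> s = t).
Proof.
  intros lt_lr h_inj.
  set (u n := epsilon (inhabits 0) (fun t => l < t < r /\ h t = n)).
  assert (u_h : forall t, l < t < r -> u (h t) = t).
  { intros t t_in.
    destruct (epsilon_spec (inhabits 0) (fun s => l < s < r /\ h s = h t)) as [s_in hs];
      [now exists t|].
    now apply h_inj. }
  destruct (exists_not_in_seq u (l + (r - l) / 3) (r - (r - l) / 3)) as [x [x_in x_new]]; [lra|].
  apply (x_new (h x)); symmetry; apply u_h; lra.
Qed.

Lemma uncountable3_of_interval (S : R * R * R -> Prop) (x z l r : R) : l < r ->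
  (forall s, l < s < r -> S (x, s, z)) -> uncountable3 S.
Proof.
  intros lt_lr HS [g g_inj].
  apply (interval_not_countable l r (fun s => g (x, s, z)) lt_lr).
  intros s t s_in t_in E.
  now injection (g_inj _ _ (HS s s_in) (HS t t_in) E).
Qed.

Lemma exists_irrational_third_half : exists w, 1/3 < w < 1/2 /\
  forall (p : nat) (C : Z), (1 <= p)%nat -> INR p * w <> IZR C.
Proof.
  set (u n := let (c, p) := Cantor.of_nat n in INR c / INR p).
  destruct (exists_not_in_seq u (1/3 + 1/100) (1/2 - 1/100)) as [w [w_in w_new]]; [lra|].
  exists w; split; [lra|].
  intros p C p_pos E.
  assert (p_ge1 : 1 <= INR p) by (apply (le_INR 1); auto).
  assert (C_nonneg : (0 <= C)%Z) by (apply le_IZR; rewrite <- E; simpl; nra).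
  apply (w_new (Cantor.to_nat (Z.to_nat C, p))).
  unfold u; rewrite Cantor.cancel_of_to, INR_IZR_INZ, Z2Nat.id, <- E by auto.
  field; lra.
Qed.

(** * Coding of an irrational rotation *)

Lemma eq0_of_multiples_bounded x : (forall N : nat, Rabs (INR N * x) < 1) -> x = 0.
Proof.
  intros bounded; destruct (Req_dec x 0) as [|x_neq0]; [assumption|exfalso].
  destruct (archimed_cor1 (Rabs x)) as [N [small N_pos]]; [now apply Rabs_pos_lt|].
  specialize (bounded N); rewrite Rabs_mult, Rabs_right in bounded by (apply Rle_ge, pos_INR).
  apply lt_INR in N_pos; simpl in N_pos.
  apply (Rmult_lt_compat_l (INR N)) in small; [|lra].
  rewrite Rinv_r in small; lra.
Qed.

Section Rotation.

Variable w : R.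
Hypothesis w_range : 0 < w < 1.

Let w_parts : (0 = Int_part w)%Z /\ w = frac_part w.
Proof. apply Int_part_frac_part_spec; [lra|ring]. Qed.

Lemma frac_part_sub_ge t : w <= frac_part t -> frac_part (t - w) = frac_part t - w.
Proof. destruct w_parts as [_ fw]; intro; rewrite Rminus_fp1, <- fw; lra. Qed.

Lemma frac_part_sub_lt t : frac_part t < w -> frac_part (t - w) = frac_part t - w + 1.
Proof. destruct w_parts as [_ fw]; intro; rewrite Rminus_fp2, <- fw; lra. Qed.

Lemma Int_part_sub_ge t : w <= frac_part t -> Int_part (t - w) = Int_part t.
Proof. destruct w_parts as [iw fw]; intro; rewrite Rminus_Int_part1, <- iw; [lia|lra]. Qed.

Lemma Int_part_sub_lt t : frac_part t < w -> Int_part (t - w) = (Int_part t - 1)%Z.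
Proof. destruct w_parts as [iw fw]; intro; rewrite Rminus_Int_part2, <- iw; [lia|lra]. Qed.

Definition rot (k : nat) : R := - INR (S k) * w.

Lemma rot_succ k : rot (S k) = rot k - w.
Proof. unfold rot; rewrite S_INR; ring. Qed.

Lemma frac_part_rot0 : frac_part (rot 0) = 1 - w.
Proof.
  destruct (Int_part_frac_part_spec (rot 0) (-1) (1 - w)) as [_ f0]; [lra|unfold rot; simpl; ring|].
  now rewrite <- f0.
Qed.

(* Each step of the rotation lowers the integer part by 0 or 1 according to the
   code [w <= frac_part]. *)
Lemma Int_part_rot_shift m n :
  (forall j, w <= frac_part (rot (m + j)) <-> w <= frac_part (rot (n + j))) ->
  forall j,
  (Int_part (rot (m + j)) - Int_part (rot (n + j)) = Int_part (rot m) - Int_part (rot n))%Z.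
Proof.
  intros same_code j; induction j as [|j IH]; [rewrite !Nat.add_0_r; lia|].
  rewrite !Nat.add_succ_r, !rot_succ.
  destruct (Rle_lt_dec w (frac_part (rot (m + j)))) as [c|c].
  - rewrite !Int_part_sub_ge; [lia|apply same_code|]; assumption.
  - rewrite !Int_part_sub_lt; [lia| |assumption].
    destruct (Rlt_le_dec (frac_part (rot (n + j))) w) as [|c']; [assumption|].
    apply same_code in c'; lra.
Qed.

Hypothesis w_irrational : forall (p : nat) (C : Z), (1 <= p)%nat -> INR p * w <> IZR C.

(* With period [p] the integer part would drop by the same integer [C] every [p]
   steps, while [rot] drops by [p * w]. *)
Lemma rot_code_aperiodic m n : (m < n)%nat ->
  ~ (forall j, w <= frac_part (rot (m + j)) <-> w <= frac_part (rot (n + j))).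
Proof.
  intros lt_mn same_code.
  set (D k := Int_part (rot k)); set (p := (n - m)%nat); set (C := (D m - D n)%Z).
  assert (D_mult : forall N, (D m - D (m + N * p)%nat = Z.of_nat N * C)%Z).
  { induction N as [|N IH]; [rewrite Nat.add_0_r; lia|].
    pose proof (Int_part_rot_shift m n same_code (N * p)) as shift.
    change (D (m + N * p)%nat - D (n + N * p)%nat = C)%Z in shift.
    replace (n + N * p)%nat with (m + S N * p)%nat in shift by (unfold p; lia).
    rewrite Nat2Z.inj_succ; lia. }
  apply (w_irrational p C); [unfold p; lia|].
  apply Rminus_diag_uniq, eq0_of_multiples_bounded; intro N.
  assert (E := f_equal IZR (D_mult N)).
  rewrite minus_IZR, mult_IZR, <- INR_IZR_INZ in E.
  destruct (base_Int_part (rot m)) as [Hm Hm'].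
  destruct (base_Int_part (rot (m + N * p))) as [HN HN'].
  fold (D m) in Hm, Hm'; fold (D (m + N * p)%nat) in HN, HN'.
  unfold rot in *; rewrite !S_INR, plus_INR, mult_INR in *.
  apply Rabs_def1; nra.
Qed.

End Rotation.

(** * Gap maps *)

Definition incr_nonexpanding (f : R -> R) : Prop :=
  (forall u, 0 <= u <= 1 -> 0 <= f u <= 1) /\
  (forall u v, 0 <= u -> u < v -> v <= 1 -> 0 < f v - f u <= v - u).

Section IncrNonexpanding.

Variable f : R -> R.
Hypothesis f_ok : incr_nonexpanding f.

Lemma incr_nonexpanding_range u : 0 <= u <= 1 -> 0 <= f u <= 1.
Proof. apply f_ok. Qed.

Lemma incr_nonexpanding_lt u v : 0 <= u -> u < v -> v <= 1 -> f u < f v.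
Proof. intros; enough (0 < f v - f u) by lra; now apply f_ok. Qed.

Lemma incr_nonexpanding_le u v : 0 <= u -> u <= v -> v <= 1 -> f u <= f v.
Proof.
  intros u_ge0 [lt_uv| ->] v_le1; [|lra].
  now apply Rlt_le, incr_nonexpanding_lt.
Qed.

Lemma incr_nonexpanding_inj u v : 0 <= u <= 1 -> 0 <= v <= 1 -> f u = f v -> u = v.
Proof.
  intros u_in v_in E; destruct (Rtotal_order u v) as [lt|[eq|gt]]; [|assumption|].
  - pose proof (incr_nonexpanding_lt u v); lra.
  - pose proof (incr_nonexpanding_lt v u); lra.
Qed.

Lemma incr_nonexpanding_dist u v : 0 <= u <= 1 -> 0 <= v <= 1 ->
  Rabs (f u - f v) <= Rabs (u - v).
Proof.
  intros u_in v_in; destruct (Rtotal_order u v) as [lt|[ -> |gt]].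
  - destruct (proj2 f_ok u v) as [pos le]; try lra.
    rewrite !Rabs_left1; lra.
  - rewrite !Rminus_diag; lra.
  - destruct (proj2 f_ok v u) as [pos le]; try lra.
    rewrite !Rabs_right; lra.
Qed.

End IncrNonexpanding.

Section GapMap.

Variables a b : R -> R.
Hypothesis a_ok : incr_nonexpanding a.
Hypothesis b_ok : incr_nonexpanding b.
Hypothesis gap : b 1 < a 0.

Definition gap_map (c x : R) : R := if Rle_dec x c then a x else b x.

Section Coding.

Variable w : R.
(* [1/3 < w < 1/2] fixes the first two letters of the itinerary of [y 0] as
   [a], [b], which places it strictly inside (0,1). *)
Hypothesis w_range : 1/3 < w < 1/2.
Hypothesis w_irrational : forall (p : nat) (C : Z), (1 <= p)%nat -> INR p * w <> IZR C.

Let w_in01 : 0 < w < 1.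
Proof. lra. Qed.

Definition coded_step (t x : R) : R := if Rle_dec w (frac_part t) then a x else b x.

Fixpoint coded_approx (n : nat) (t : R) : R :=
  match n with
  | O => 0
  | S n => coded_step t (coded_approx n (t - w))
  end.

Lemma coded_step_range t x : 0 <= x <= 1 -> 0 <= coded_step t x <= 1.
Proof. unfold coded_step; destruct (Rle_dec _ _); apply incr_nonexpanding_range; auto. Qed.

Lemma coded_step_le t x y : 0 <= x -> x <= y -> y <= 1 -> coded_step t x <= coded_step t y.
Proof. unfold coded_step; destruct (Rle_dec _ _); apply incr_nonexpanding_le; auto. Qed.

Lemma coded_step_dist t x y : 0 <= x <= 1 -> 0 <= y <= 1 ->
  Rabs (coded_step t x - coded_step t y) <= Rabs (x - y).
Proof. unfold coded_step; destruct (Rle_dec _ _); apply incr_nonexpanding_dist; auto. Qed.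

Lemma coded_approx_range n t : 0 <= coded_approx n t <= 1.
Proof.
  revert t; induction n as [|n IH]; intro t; simpl; [lra|].
  now apply coded_step_range.
Qed.

Lemma coded_approx_growing t : Un_growing (fun n => coded_approx n t).
Proof.
  intro n; revert t; induction n as [|n IH]; intro t.
  - simpl; pose proof (coded_step_range t 0); lra.
  - change (coded_step t (coded_approx n (t - w)) <= coded_step t (coded_approx (S n) (t - w))).
    pose proof (coded_approx_range n (t - w)); pose proof (coded_approx_range (S n) (t - w)).
    apply coded_step_le; [lra|apply IH|lra].
Qed.

Lemma coded_approx_bounded t : has_ub (fun n => coded_approx n t).
Proof. exists 1; intros y [n ->]; apply coded_approx_range. Qed.

Lemma coded_approx_le n t1 t2 : frac_part t1 <= frac_part t2 ->
  coded_approx n t1 <= coded_approx n t2.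
Proof.
  revert t1 t2; induction n as [|n IH]; intros t1 t2 le12; simpl; [lra|].
  pose proof (coded_approx_range n (t1 - w)); pose proof (coded_approx_range n (t2 - w)).
  unfold coded_step; destruct (Rle_dec w (frac_part t1)) as [c1|c1];
    destruct (Rle_dec w (frac_part t2)) as [c2|c2]; try lra.
  - apply incr_nonexpanding_le; auto; try lra.
    apply IH; rewrite !frac_part_sub_ge; auto; lra.
  - pose proof (incr_nonexpanding_le b b_ok (coded_approx n (t1 - w)) 1).
    pose proof (incr_nonexpanding_le a a_ok 0 (coded_approx n (t2 - w))).
    lra.
  - apply incr_nonexpanding_le; auto; try lra.
    apply IH; rewrite !frac_part_sub_lt; auto; lra.
Qed.

(* The point of [0,1] whose backward itinerary under [a] and [b] is the coding of the
   rotation orbit [t, t - w, t - 2w, ...]. *)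
Definition coded_point (t : R) : R :=
  proj1_sig (growing_cv _ (coded_approx_growing t) (coded_approx_bounded t)).

Lemma coded_point_cv t : Un_cv (fun n => coded_approx n t) (coded_point t).
Proof. unfold coded_point; now destruct (growing_cv _ _ _). Qed.

Lemma coded_point_range t : 0 <= coded_point t <= 1.
Proof.
  split.
  - apply (Rle_trans _ (coded_approx 0 t)); [simpl; lra|].
    apply (growing_ineq (fun n => coded_approx n t) (coded_point t)) with (n := 0%nat).
    + apply coded_approx_growing.
    + apply coded_point_cv.
  - apply (Rle_cv_lim (Un := fun n => coded_approx n t) (Vn := fun _ => 1));
      [intro; apply coded_approx_range|apply coded_point_cv|].
    intros eps eps_pos; exists 0%nat; intros; unfold Rdist; rewrite Rminus_diag, Rabs_R0; lra.
Qed.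

Lemma coded_point_step t : coded_point t = coded_step t (coded_point (t - w)).
Proof.
  apply (UL_sequence (fun n => coded_approx (S n) t)).
  - intros eps eps_pos; destruct (coded_point_cv t eps eps_pos) as [N HN].
    exists N; intros n n_ge; apply HN; lia.
  - intros eps eps_pos; destruct (coded_point_cv (t - w) eps eps_pos) as [N HN].
    exists N; intros n n_ge; specialize (HN n n_ge); unfold Rdist in *; simpl.
    eapply Rle_lt_trans; [apply coded_step_dist|exact HN];
      auto using coded_approx_range, coded_point_range.
Qed.

Lemma coded_point_le t1 t2 : frac_part t1 <= frac_part t2 -> coded_point t1 <= coded_point t2.
Proof.
  intro; apply (Rle_cv_lim (Un := fun n => coded_approx n t1) (Vn := fun n => coded_approx n t2));
    auto using coded_approx_le, coded_point_cv.
Qed.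

Lemma coded_point_upper t : w <= frac_part t -> a 0 <= coded_point t.
Proof.
  intro; rewrite coded_point_step; unfold coded_step; destruct (Rle_dec _ _); [|lra].
  pose proof (coded_point_range (t - w)); apply incr_nonexpanding_le; auto; lra.
Qed.

Lemma coded_point_lower t : frac_part t < w -> coded_point t <= b 1.
Proof.
  intro; rewrite coded_point_step; unfold coded_step; destruct (Rle_dec _ _); [lra|].
  pose proof (coded_point_range (t - w)); apply incr_nonexpanding_le; auto; lra.
Qed.

Lemma coded_point_code t1 t2 : coded_point t1 = coded_point t2 ->
  (w <= frac_part t1 <-> w <= frac_part t2).
Proof.
  intro E; split; intro c; apply Rnot_lt_le; intro c'.
  - pose proof (coded_point_upper t1 c); pose proof (coded_point_lower t2 c'); lra.
  - pose proof (coded_point_upper t2 c); pose proof (coded_point_lower t1 c'); lra.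
Qed.

Let y k := coded_point (rot w k).

Lemma orbit_step k : y k = coded_step (rot w k) (y (S k)).
Proof. unfold y; rewrite rot_succ; apply coded_point_step. Qed.

Lemma orbit_shift m n : y m = y n -> forall j, y (m + j)%nat = y (n + j)%nat.
Proof.
  intros E j; induction j as [|j IH]; [now rewrite !Nat.add_0_r|].
  rewrite !Nat.add_succ_r.
  pose proof (orbit_step (m + j)) as Sm; pose proof (orbit_step (n + j)) as Sn.
  pose proof (coded_point_code _ _ IH) as same.
  unfold y in *; pose proof (coded_point_range (rot w (S (m + j)))).
  pose proof (coded_point_range (rot w (S (n + j)))).
  unfold coded_step in Sm, Sn; destruct (Rle_dec w (frac_part (rot w (m + j)))) as [c|c];
    destruct (Rle_dec w (frac_part (rot w (n + j)))) as [c'|c']; try tauto.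
  - apply (incr_nonexpanding_inj a); auto; congruence.
  - apply (incr_nonexpanding_inj b); auto; congruence.
Qed.

Lemma orbit_inj m n : y m = y n -> m = n.
Proof.
  intro E; destruct (Nat.lt_total m n) as [lt|[eq|gt]]; [exfalso|assumption|exfalso].
  - apply (rot_code_aperiodic w w_in01 w_irrational m n lt); intro j.
    apply coded_point_code, (orbit_shift m n E j).
  - apply (rot_code_aperiodic w w_in01 w_irrational n m gt); intro j.
    apply coded_point_code; symmetry; apply (orbit_shift m n E j).
Qed.

Lemma orbit_start_in01 : 0 < y 0 < 1.
Proof.
  assert (y1_low : y 1%nat <= b 1).
  { apply coded_point_lower; rewrite rot_succ, frac_part_sub_ge; rewrite ?frac_part_rot0; lra. }
  pose proof (orbit_step 0) as E; unfold coded_step in E; rewrite frac_part_rot0 in E by lra.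
  destruct (Rle_dec _ _) as [_|]; [|lra].
  assert (y1_range : 0 <= y 1%nat <= 1) by apply coded_point_range.
  assert (a 0 <= a (y 1%nat)) by (apply incr_nonexpanding_le; auto; lra).
  pose proof (incr_nonexpanding_range b b_ok 0 ltac:(lra)).
  pose proof (incr_nonexpanding_range a a_ok 0 ltac:(lra)).
  pose proof (incr_nonexpanding_range a a_ok 1 ltac:(lra)).
  assert (a (y 1%nat) < a 1) by (apply incr_nonexpanding_lt; auto; lra).
  lra.
Qed.

Lemma orbit_gap_map k : y k = gap_map (y 0) (y (S k)).
Proof.
  rewrite orbit_step; unfold coded_step, gap_map, y.
  destruct (Rle_dec w (frac_part (rot w k))) as [c|c];
    destruct (Rle_dec (coded_point (rot w (S k))) (coded_point (rot w 0))) as [l|l]; auto.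
  - exfalso; apply l, coded_point_le.
    rewrite rot_succ, frac_part_sub_ge; rewrite ?frac_part_rot0; try lra.
    pose proof (base_fp (rot w k)); lra.
  - exfalso; apply Rnot_le_lt in c.
    assert (coded_point (rot w 0) <= coded_point (rot w (S k))).
    { apply coded_point_le; rewrite rot_succ, frac_part_sub_lt; rewrite ?frac_part_rot0; try lra.
      pose proof (base_fp (rot w k)); lra. }
    assert (S k = 0%nat) by (apply orbit_inj; unfold y; lra); lia.
Qed.

End Coding.

Lemma gap_map_backward_orbit : exists y : nat -> R,
  (forall k, 0 <= y k <= 1) /\ 0 < y 0%nat < 1 /\ (forall m n, y m = y n -> m = n) /\
  (forall k, y k = gap_map (y 0%nat) (y (S k))).
Proof.
  destruct exists_irrational_third_half as [w [w_range w_irrational]].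
  exists (fun k => coded_point w (rot w k)).
  split; [intro; apply coded_point_range|].
  split; [now apply orbit_start_in01|].
  split; [intros m n; now apply orbit_inj|].
  intro k; now apply orbit_gap_map.
Qed.

End GapMap.

Lemma incr_nonexpanding_comp f g :
  incr_nonexpanding f -> incr_nonexpanding g -> incr_nonexpanding (fun x => f (g x)).
Proof.
  intros [f_range f_step] [g_range g_step]; split.
  - intros u u_in; apply f_range, g_range, u_in.
  - intros u v u_ge0 lt_uv v_le1.
    destruct (g_step u v) as [g_pos g_le]; auto.
    pose proof (g_range u ltac:(lra)); pose proof (g_range v ltac:(lra)).
    destruct (f_step (g u) (g v)) as [f_pos f_le]; lra.
Qed.

Lemma incr_nonexpanding_reflect f :
  incr_nonexpanding f -> incr_nonexpanding (fun x => 1 - f (1 - x)).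
Proof.
  intros [f_range f_step]; split.
  - intros u u_in; pose proof (f_range (1 - u) ltac:(lra)); lra.
  - intros u v u_ge0 lt_uv v_le1.
    destruct (f_step (1 - v) (1 - u)) as [pos le]; lra.
Qed.

(** * The dynamics on the boundary of the simplex *)

(* Moebius transformations fixing 0; the maps [f_j] act on the edges of the
   simplex through them. *)
Definition mob (T p q t : R) : R := p * t / (q + T * t).

Section Mobius.

Variables T p q : R.
Hypothesis T_pos : 0 < T.
Hypothesis p_range : 0 < p <= q.

Lemma mob_lt1 t : 0 <= t <= 1 -> mob T p q t < 1.
Proof.
  intro; unfold mob, Rdiv; apply (Rmult_lt_reg_r (q + T * t)); [nra|].
  rewrite Rmult_assoc, Rinv_l, Rmult_1_r; nra.
Qed.

Lemma mob_pos t : 0 < t <= 1 -> 0 < mob T p q t.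
Proof. intro; unfold mob; apply Rdiv_lt_0_compat; nra. Qed.

Lemma incr_nonexpanding_mob : incr_nonexpanding (mob T p q).
Proof.
  split.
  - intros t t_in; pose proof (mob_lt1 t t_in).
    split; [|lra]; unfold mob, Rdiv; apply Rmult_le_pos; [nra|apply Rlt_le, Rinv_0_lt_compat; nra].
  - intros u v u_ge0 lt_uv v_le1.
    assert (0 < q + T * u) by nra; assert (0 < q + T * v) by nra.
    assert (D_pos : 0 < (q + T * u) * (q + T * v)) by nra.
    replace (mob T p q v - mob T p q u) with (p * q * (v - u) / ((q + T * u) * (q + T * v)))
      by (unfold mob; field; nra).
    assert (0 < p * q) by nra.
    split; [apply Rdiv_lt_0_compat; nra|].
    assert (p * q <= (q + T * u) * (q + T * v)).
    { assert (0 <= T * u) by nra; assert (0 <= T * v) by nra; nra. }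
    unfold Rdiv; apply (Rmult_le_reg_r ((q + T * u) * (q + T * v))); [assumption|].
    rewrite Rmult_assoc, Rinv_l, Rmult_1_r; nra.
Qed.

End Mobius.

Lemma ptof_inj x y i : ptof x i = ptof y i -> x = y.
Proof. destruct i; unfold ptof; simpl; intro E; injection E; lra. Qed.

Lemma switch_below d i x : 0 <= x <= 1 -> x <= d i -> switch d (ptof x i) (nxt i).
Proof.
  intros x_in le; exists i, x; split; [assumption|split; [reflexivity|]].
  destruct le as [lt|eq]; [left|right; right]; auto.
Qed.

Lemma switch_above d i x : 0 <= x <= 1 -> d i <= x -> switch d (ptof x i) (nxt (nxt i)).
Proof.
  intros x_in le; exists i, x; split; [assumption|split; [reflexivity|]].
  destruct le as [lt|eq]; right; [left|right]; auto with real.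
Qed.

Section FaceMaps.

Variables r1 r2 r3 : R.
Hypotheses (h1 : 0 < r1 < 1) (h2 : 0 < r2 < 1) (h3 : 0 < r3 < 1) (hsum : r1 + r2 + r3 > 1).

Let T_pos : 0 < theta r1 r2 r3.
Proof. unfold theta; lra. Qed.

Ltac face_map_compute q t :=
  assert (0 < q + theta r1 r2 r3 * t) by nra;
  unfold fj, ptof, mob, padd, pscale, e, coord, rho, theta in *; simpl;
  f_equal; field; lra.

Lemma fj_A1_A2 u : 0 <= u <= 1 ->
  fj r1 r2 r3 i2 (ptof u i1) = ptof (mob (theta r1 r2 r3) r1 (1 - r2) (1 - u)) i2.
Proof. intro; face_map_compute (1 - r2) (1 - u). Qed.

Lemma fj_A1_A3 u : 0 <= u <= 1 ->
  fj r1 r2 r3 i3 (ptof u i1) = ptof (1 - mob (theta r1 r2 r3) r1 (1 - r3) u) i3.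
Proof. intro; face_map_compute (1 - r3) u. Qed.

Lemma fj_A2_A1 v : 0 <= v <= 1 ->
  fj r1 r2 r3 i1 (ptof v i2) = ptof (1 - mob (theta r1 r2 r3) r2 (1 - r1) v) i1.
Proof. intro; face_map_compute (1 - r1) v. Qed.

Lemma fj_A3_A1 v : 0 <= v <= 1 ->
  fj r1 r2 r3 i1 (ptof v i3) = ptof (mob (theta r1 r2 r3) r3 (1 - r1) (1 - v)) i1.
Proof. intro; face_map_compute (1 - r1) (1 - v). Qed.

End FaceMaps.

Lemma iter_backward_orbit (g : R -> R) (y : nat -> R) : (forall k, y k = g (y (S k))) ->
  forall n k, Nat.iter n g (y (n + k)%nat) = y k.
Proof.
  intros y_step n; induction n as [|n IH]; intro k; [reflexivity|].
  rewrite Nat.iter_succ, Nat.add_succ_comm, IH; symmetry; apply y_step.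
Qed.

Lemma injective_not_in_list {A : Type} (f : nat -> A) (l : list A) :
  (forall m n, f m = f n -> m = n) -> ~ (forall k, In (f k) l).
Proof.
  intros f_inj f_in.
  set (l' := map f (seq 0 (S (length l)))).
  assert (l'_nodup : NoDup l') by (apply Injective_map_NoDup; [exact f_inj|apply seq_NoDup]).
  assert (l'_incl : incl l' l).
  { intros z z_in; apply in_map_iff in z_in as [k [<- _]]; apply f_in. }
  pose proof (NoDup_incl_length l'_nodup l'_incl) as le.
  unfold l' in le; rewrite length_map, length_seq in le; lia.
Qed.

Lemma preimage_of_half_steps r1 r2 r3 d (P M : R -> pt) (g : R -> R) :
  (forall u, 0 <= u <= 1 -> 0 <= g u <= 1) ->
  (forall u, 0 <= u <= 1 -> phi r1 r2 r3 d (P u) (M u)) ->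
  (forall u, 0 <= u <= 1 -> phi r1 r2 r3 d (M u) (P (g u))) ->
  forall u n, 0 <= u <= 1 -> (1 <= n)%nat -> preimage r1 r2 r3 d (P u) (P (Nat.iter n g u)).
Proof.
  intros g_range to_M from_M u n u_in n_pos.
  assert (orbit_in : forall k, 0 <= Nat.iter k g u <= 1).
  { induction k as [|k IH]; [exact u_in|now apply g_range]. }
  set (traj t := if Nat.even t then P (Nat.iter (Nat.div2 t) g u)
                 else M (Nat.iter (Nat.div2 t) g u)).
  assert (traj_even : forall k, traj (2 * k)%nat = P (Nat.iter k g u)).
  { intro k; unfold traj; now rewrite Nat.even_even, Nat.div2_double. }
  assert (traj_odd : forall k, traj (S (2 * k)) = M (Nat.iter k g u)).
  { intro k; unfold traj; replace (S (2 * k)) with (2 * k + 1)%nat by lia.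
    rewrite Nat.even_odd, Nat.add_1_r, Nat.div2_succ_double; reflexivity. }
  exists traj; split; [|split].
  - intro t; destruct (Nat.Even_or_Odd t) as [[k ->]|[k ->]].
    + rewrite traj_even, traj_odd; apply to_M, orbit_in.
    + rewrite Nat.add_1_r, traj_odd.
      replace (S (S (2 * k))) with (2 * S k)%nat by lia.
      rewrite traj_even, Nat.iter_succ; apply from_M, orbit_in.
  - exact (traj_even 0%nat).
  - exists (2 * n)%nat; split; [lia|apply traj_even].
Qed.

Section ReturnMap.

Variables r1 r2 r3 : R.
Hypotheses (h1 : 0 < r1 < 1) (h2 : 0 < r2 < 1) (h3 : 0 < r3 < 1) (hsum : r1 + r2 + r3 > 1).
Hypotheses (h12 : r1 + r2 <= 1) (h13 : r1 + r3 <= 1).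

Local Notation T := (theta r1 r2 r3).

Let T_pos : 0 < T.
Proof. unfold theta; lra. Qed.

(* Coordinates of the images of [(u, 1)] under [f_2] and [f_3]. *)
Definition via_A2 (u : R) : R := mob T r1 (1 - r2) (1 - u).
Definition via_A3 (u : R) : R := 1 - mob T r1 (1 - r3) u.

(* The first-return maps to A_1^0 through A_2^0 (by f_2 then f_1) and through
   A_3^0 (by f_3 then f_1). *)
Definition return_a (u : R) : R := 1 - mob T r2 (1 - r1) (mob T r1 (1 - r2) (1 - u)).
Definition return_b (u : R) : R := mob T r3 (1 - r1) (mob T r1 (1 - r3) u).

Lemma return_a_ok : incr_nonexpanding return_a.
Proof.
  apply (incr_nonexpanding_reflect (fun x => mob T r2 (1 - r1) (mob T r1 (1 - r2) x))).
  apply (incr_nonexpanding_comp (mob T r2 (1 - r1)) (mob T r1 (1 - r2)));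
    apply incr_nonexpanding_mob; lra.
Qed.

Lemma return_b_ok : incr_nonexpanding return_b.
Proof.
  apply (incr_nonexpanding_comp (mob T r3 (1 - r1)) (mob T r1 (1 - r3)));
    apply incr_nonexpanding_mob; lra.
Qed.

(* Since [1 - r1 + theta = r2 + r3], [mob T r2 (1 - r1) 1 + mob T r3 (1 - r1) 1 = 1];
   the inequality is strict because [mob T r1 (1 - r2) 1 < 1]. *)
Lemma return_gap : return_b 1 < return_a 0.
Proof.
  unfold return_a, return_b; rewrite Rminus_0_r.
  assert (m1 : 0 <= mob T r1 (1 - r2) 1 < 1).
  { split; [apply (incr_nonexpanding_mob T r1 (1 - r2)); lra|apply mob_lt1; lra]. }
  assert (m1' : 0 <= mob T r1 (1 - r3) 1 <= 1)
    by (apply (incr_nonexpanding_mob T r1 (1 - r3)); lra).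
  assert (mob T r2 (1 - r1) (mob T r1 (1 - r2) 1) < mob T r2 (1 - r1) 1)
    by (apply (incr_nonexpanding_lt _ (incr_nonexpanding_mob T r2 (1 - r1) T_pos ltac:(lra))); lra).
  assert (mob T r3 (1 - r1) (mob T r1 (1 - r3) 1) <= mob T r3 (1 - r1) 1)
    by (apply (incr_nonexpanding_le _ (incr_nonexpanding_mob T r3 (1 - r1) T_pos ltac:(lra))); lra).
  assert (mob T r2 (1 - r1) 1 + mob T r3 (1 - r1) 1 = 1) by (unfold mob, theta; field; lra).
  lra.
Qed.

Lemma via_A2_range u : 0 <= u <= 1 -> 0 <= via_A2 u <= 1.
Proof. intro; apply (incr_nonexpanding_mob T r1 (1 - r2)); lra. Qed.

Lemma via_A3_range u : 0 <= u <= 1 -> 0 <= via_A3 u <= 1.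
Proof.
  intro; unfold via_A3.
  pose proof (incr_nonexpanding_range _ (incr_nonexpanding_mob T r1 (1 - r3) T_pos ltac:(lra)) u).
  lra.
Qed.

Lemma via_A2_pos u : 0 <= u < 1 -> 0 < via_A2 u.
Proof. intro; apply mob_pos; lra. Qed.

Lemma via_A3_interior u : 0 < u <= 1 -> 0 < via_A3 u < 1.
Proof.
  intro; unfold via_A3.
  pose proof (mob_pos T r1 (1 - r3) T_pos ltac:(lra) u).
  pose proof (mob_lt1 T r1 (1 - r3) T_pos ltac:(lra) u).
  lra.
Qed.

Section Decisions.

Variables (dl : R) (d : idx -> R).
Hypotheses (dl_in : 0 <= dl <= 1) (d1 : d i1 = dl).
Hypotheses (d2 : d i2 <= via_A2 dl) (d3 : via_A3 dl <= d i3).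

Definition midpoint (u : R) : pt :=
  if Rle_dec u dl then ptof (via_A2 u) i2 else ptof (via_A3 u) i3.

Lemma phi_to_midpoint u : 0 <= u <= 1 -> phi r1 r2 r3 d (ptof u i1) (midpoint u).
Proof.
  intro u_in; unfold midpoint; destruct (Rle_dec u dl) as [le|gt].
  - exists i2; split; [apply switch_below; [|rewrite d1]; auto|].
    symmetry; now apply fj_A1_A2.
  - exists i3; split; [apply switch_above; [|rewrite d1]; auto; lra|].
    symmetry; now apply fj_A1_A3.
Qed.

Lemma phi_from_midpoint u : 0 <= u <= 1 ->
  phi r1 r2 r3 d (midpoint u) (ptof (gap_map return_a return_b dl u) i1).
Proof.
  intro u_in; unfold midpoint, gap_map; destruct (Rle_dec u dl) as [le|gt].
  - exists i1; split.
    + apply switch_above; [now apply via_A2_range|].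
      apply (Rle_trans _ _ _ d2).
      apply (incr_nonexpanding_le _ (incr_nonexpanding_mob T r1 (1 - r2) T_pos ltac:(lra))); lra.
    + rewrite fj_A2_A1; auto using via_A2_range.
  - exists i1; split.
    + apply switch_below; [now apply via_A3_range|].
      refine (Rle_trans _ _ _ _ d3); unfold via_A3.
      enough (mob T r1 (1 - r3) dl <= mob T r1 (1 - r3) u) by lra.
      apply (incr_nonexpanding_le _ (incr_nonexpanding_mob T r1 (1 - r3) T_pos ltac:(lra))); lra.
    + rewrite fj_A3_A1 by auto using via_A3_range.
      unfold via_A3, return_b; do 2 f_equal; ring.
Qed.

Lemma return_map_preimage u n : 0 <= u <= 1 -> (1 <= n)%nat ->
  preimage r1 r2 r3 d (ptof u i1) (ptof (Nat.iter n (gap_map return_a return_b dl) u) i1).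
Proof.
  apply (preimage_of_half_steps r1 r2 r3 d (fun u => ptof u i1) midpoint).
  - intros v v_in; unfold gap_map; destruct (Rle_dec _ _).
    + now apply return_a_ok.
    + now apply return_b_ok.
  - exact phi_to_midpoint.
  - exact phi_from_midpoint.
Qed.

Lemma backward_orbit_preimage (y : nat -> R) :
  (forall k, 0 <= y k <= 1) -> (forall k, y k = gap_map return_a return_b dl (y (S k))) ->
  forall k, preimage r1 r2 r3 d (ptof (y (S k)) i1) (ptof (y 0%nat) i1).
Proof.
  intros y_range y_step k.
  rewrite <- (iter_backward_orbit _ y y_step (S k) 0), Nat.add_0_r.
  apply return_map_preimage; [apply y_range|lia].
Qed.

End Decisions.

End ReturnMap.

Theorem lemma5p1 (r1 r2 r3 : R)
  (h1 : 0 < r1 < 1) (h2 : 0 < r2 < 1) (h3 : 0 < r3 < 1)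
  (hsum : r1 + r2 + r3 > 1)
  (h12 : r1 + r2 <= 1) (h13 : r1 + r3 <= 1) (h23 : r2 + r3 <= 1) :
  uncountable3 (fun d : R * R * R =>
    (forall i, 0 < dvec d i < 1) /\
    exists i, infinite_pts
      (fun z => preimage r1 r2 r3 (dvec d) z (ptof (dvec d i) i))).
Proof.
  destruct (gap_map_backward_orbit (return_a r1 r2 r3) (return_b r1 r2 r3))
    as [y [y_range [y0_in [y_inj y_step]]]]; auto using return_a_ok, return_b_ok, return_gap.
  set (dl := y 0%nat) in *.
  assert (0 < via_A2 r1 r2 r3 dl <= 1).
  { split; [apply via_A2_pos|apply via_A2_range]; auto; lra. }
  assert (0 < via_A3 r1 r2 r3 dl < 1) by (apply via_A3_interior; auto; lra).
  apply (uncountable3_of_interval _ dl (via_A3 r1 r2 r3 dl) 0 (via_A2 r1 r2 r3 dl)); [lra|].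
  intros s s_in; split; [intros []; simpl; lra|].
  exists i1; intros [l l_covers].
  apply (injective_not_in_list (fun k => ptof (y (S k)) i1) l).
  - intros m n E; apply ptof_inj, y_inj in E; lia.
  - intro k; apply l_covers; simpl.
    apply backward_orbit_preimage with (dl := dl); auto; simpl; lra.
Qed.
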